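(* Let $G_1,\dots,G_k$ ($k>1$) be connected graphs with at least one edge each, and let $G$ be any coalescence of $G_1,\dots,G_k$. Let $f:\mathbb{R}\to\mathbb{R}$ with $f(0)=0$. Then $f[-]$ preserves positivity on $\mathcal{P}_G(\mathbb{R})$ if and only if (1) $f[-]$ preserves positivity on each $\mathcal{P}_{G_i}(\mathbb{R})$, and (2) $f$ is continuous and super-additive on $[0,\infty)$. In particular, for any $\alpha\in\mathbb{R}$, $\psi_\alpha$ (resp. $\phi_\alpha$) preserves positivity on $\mathcal{P}_G(\mathbb{R})$ if and only if it does so on $\mathcal{P}_{G_i}(\mathbb{R})$ for all $1\le i\le k$ and $\alpha\ge1$; that is, \[ \mathcal{H}^\psi_G=[1,\infty)\cap\bigcap_{i=1}^k\mathcal{H}^\psi_{G_i},\qquad \mathcal{H}^\phi_G=[1,\infty)\cap\bigcap_{i=1}^k\mathcal{H}^\phi_{G_i}. \]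
   Context: Graphs are finite and simple. A coalescence of two graphs $H_1,H_2$ is the graph obtained from their disjoint union by identifying a vertex of $H_1$ with a vertex of $H_2$; a coalescence of $G_1,\dots,G_k$ is obtained iteratively by coalescing a coalescence of $G_1,\dots,G_{i-1}$ with $G_i$. Super-additive on $[0,\infty)$ means $f(x+y)\ge f(x)+f(y)$ for $x,y\ge0$. For a graph $H$ on $\{1,\dots,n\}$, $\mathcal{P}_H(\mathbb{R})$ is the set of real symmetric PSD $n\times n$ matrices $M$ with $m_{ij}=0$ whenever $i\ne j$ and $(i,j)$ is not an edge. $f[M]=(f(m_{ij}))$; $f[-]$ preserves positivity on $\mathcal{P}_H(\mathbb{R})$ if $f[M]\in\mathcal{P}_H(\mathbb{R})$ for all $M\in\mathcal{P}_H(\mathbb{R})$. $\psi_\alpha(x)=\mathrm{sgn}(x)|x|^\alpha$, $\phi_\alpha(x)=|x|^\alpha$ ($x\ne0$), $\psi_\alpha(0)=\phi_\alpha(0)=0$; $\mathcal{H}_H^\psi$ (resp. $\mathcal{H}_H^\phi$) is the set of $\alpha\in\mathbb{R}$ such that $\psi_\alpha[-]$ (resp. $\phi_\alpha[-]$) preserves positivity on $\mathcal{P}_H(\mathbb{R})$. *)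

From HB Require Import structures.
From mathcomp Require Import all_boot all_order all_algebra.
From mathcomp Require Import all_classical all_reals all_analysis.

Set Implicit Arguments.
Unset Strict Implicit.
Unset Printing Implicit Defensive.

Import Order.TTheory GRing.Theory Num.Theory.
Local Open Scope ring_scope.
Import numFieldNormedType.Exports.
Local Open Scope classical_set_scope.

Record graph := Graph {
  gn : nat;
  gadj : rel 'I_gn;
  gadj_sym : forall x y, gadj x y = gadj y x;
  gadj_irr : forall x, gadj x x = false
}.

Arguments gadj : clear implicits.

Definition connected_graph (G : graph) : Prop :=
  forall x y : 'I_(gn G), connect (gadj G) x y.

Definition has_edge (G : graph) : Prop :=
  exists x y : 'I_(gn G), gadj G x y.

(* G is (isomorphic to) the graph obtained from the disjoint union of H1 and H2
   by identifying a vertex v1 of H1 with a vertex v2 of H2: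
   p, q embed H1, H2 into G, cover G, overlap exactly at p v1 = q v2,
   and the edges of G are exactly the images of the edges of H1 and H2. *)
Definition coalescence2 (H1 H2 G : graph) : Prop :=
  exists (v1 : 'I_(gn H1)) (v2 : 'I_(gn H2))
         (p : 'I_(gn H1) -> 'I_(gn G)) (q : 'I_(gn H2) -> 'I_(gn G)),
    [/\ injective p, injective q,
        (forall x y, p x = q y <-> (x = v1 /\ y = v2)),
        (forall z, (exists x, p x = z) \/ (exists y, q y = z)) &
        (forall a b, gadj G a b <->
           ((exists x y, [/\ p x = a, p y = b & gadj H1 x y]) \/
            (exists x y, [/\ q x = a, q y = b & gadj H2 x y])))].

(* coalescence Gs i G : G is a coalescence of Gs 0, ..., Gs i, built
   iteratively by coalescing a coalescence of Gs 0..Gs (i-1) with Gs i. *)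
Inductive coalescence (Gs : nat -> graph) : nat -> graph -> Prop :=
| coal0 : coalescence Gs 0 (Gs 0)
| coalS i H G : coalescence Gs i H -> coalescence2 H (Gs i.+1) G ->
                coalescence Gs i.+1 G.

Definition psd (R : realType) n (A : 'M[R]_n) : Prop :=
  A^T = A /\ forall v : 'cV[R]_n, 0 <= (v^T *m A *m v) 0 0.

Definition PG (R : realType) (G : graph) (A : 'M[R]_(gn G)) : Prop :=
  psd A /\ forall i j, i != j -> ~~ gadj G i j -> A i j = 0.

Definition preserves_positivity (R : realType) (f : R -> R) (G : graph) : Prop :=
  forall A : 'M[R]_(gn G), PG A -> PG (map_mx f A).

Definition superadditive_nonneg (R : realType) (f : R -> R) : Prop :=
  forall x y : R, 0 <= x -> 0 <= y -> f x + f y <= f (x + y).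

Definition continuous_nonneg (R : realType) (f : R -> R) : Prop :=
  {within [set x : R | 0 <= x], continuous f}.

Definition psi (R : realType) (a : R) (x : R) : R :=
  if x == 0 then 0 else Num.sg x * powR `|x| a.

Definition phi (R : realType) (a : R) (x : R) : R :=
  if x == 0 then 0 else powR `|x| a.

From HB Require Import structures.
From mathcomp Require Import all_boot all_order all_algebra.
From mathcomp Require Import all_classical all_reals all_analysis.
From mathcomp Require Import ring lra zify.
Import Order.TTheory GRing.Theory Num.Theory.
Import numFieldNormedType.Exports.
Local Open Scope ring_scope.
Set Implicit Arguments.
Unset Strict Implicit.
Unset Printing Implicit Defensive.

(* Necessity: each G_i, and also the path on three vertices through a cut vertex,
   is an induced subgraph of G.  Rank-two test matrices in P_{path3} show that f is
   nonnegative and superadditive on [0, oo) and that f(b)^2 <= f(a) f(c) whenever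
   b^2 = a c.  Such an f is nondecreasing; it either vanishes on (0, oo) or is
   positive there, and then f(x q^j) grows at least linearly in j, so choosing
   q^N = 2 bounds the jump f(x q) - f(x) by (f(2x) - f(x)) / N: f is continuous.
   Sufficiency, for one coalescence at the cut vertex c: a matrix A in P_G is the
   sum of PSD matrices B, C supported on G_1 and G_2: B takes the least share beta
   of A_cc that makes it PSD, and C the rest.  Then
   f[A] = f[B] + f[C] + (f(A_cc) - f(beta) - f(A_cc - beta)) E_cc,
   and the last coefficient is nonnegative by superadditivity.  For the powers,
   superadditivity at (1, 1) reads 2 <= 2^alpha. *)

Section QuadraticForm.
Variable R : realType.

Definition qform n (A : 'M[R]_n) (v : 'cV[R]_n) : R := (v^T *m A *m v) 0 0.

Lemma qformE n (A : 'M[R]_n) v :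
  qform A v = \sum_i \sum_j v i 0 * A i j * v j 0.
Proof.
rewrite /qform mxE.
under eq_bigr => j _ do rewrite mxE big_distrl /=.
rewrite exchange_big /=; apply: eq_bigr => i _; apply: eq_bigr => j _.
by rewrite !mxE.
Qed.

Lemma qformD n (A B : 'M[R]_n) v : qform (A + B) v = qform A v + qform B v.
Proof. by rewrite /qform mulmxDr mulmxDl mxE. Qed.

Lemma qformZ n (a : R) (A : 'M[R]_n) v : qform (a *: A) v = a * qform A v.
Proof. by rewrite /qform -scalemxAr -scalemxAl mxE. Qed.

Lemma qformZv n (a : R) (A : 'M[R]_n) v : qform A (a *: v) = a ^+ 2 * qform A v.
Proof.
rewrite /qform; have -> : (a *: v)^T = a *: v^T by apply/matrixP => i j; rewrite !mxE.
rewrite -!scalemxAl -scalemxAr !mxE; ring.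
Qed.

Lemma qform0v n (A : 'M[R]_n) : qform A 0 = 0.
Proof. by rewrite /qform mulmx0 mxE. Qed.

Lemma qform_delta n (A : 'M[R]_n) c : qform A (delta_mx c 0) = A c c.
Proof. by rewrite /qform trmx_delta -rowE -colE !mxE. Qed.

Lemma qform_delta_mx n (c : 'I_n) v : qform (delta_mx c c) v = v c 0 ^+ 2.
Proof.
rewrite /qform -(mul_delta_mx (0 : 'I_1)) !mulmxA -colE -mulmxA -rowE.
by rewrite !mxE big_ord1 !mxE expr2.
Qed.

Lemma psd_qform n (A : 'M[R]_n) v : psd A -> 0 <= qform A v.
Proof. by case=> _; apply. Qed.

Lemma psd_mulmx_tr m n (A : 'M[R]_n) (M : 'M[R]_(m, n)) :
  psd A -> psd (M *m A *m M^T).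
Proof.
move=> [As Ap]; split; first by rewrite !trmx_mul trmxK As mulmxA.
by move=> v; have := Ap (M^T *m v); rewrite trmx_mul trmxK !mulmxA.
Qed.

Lemma psdD n (A B : 'M[R]_n) : psd A -> psd B -> psd (A + B).
Proof.
move=> [As Ap] [Bs Bp]; split; first by rewrite linearD /= As Bs.
by move=> v; rewrite -[_ 0 0]/(qform _ v) qformD addr_ge0 //; [apply: Ap|apply: Bp].
Qed.

Lemma psdZ n (a : R) (A : 'M[R]_n) : 0 <= a -> psd A -> psd (a *: A).
Proof.
move=> a0 [As Ap]; split; first by rewrite linearZ /= As.
by move=> v; rewrite -[_ 0 0]/(qform _ v) qformZ mulr_ge0 //; apply: Ap.
Qed.

Lemma psd_delta_mx n (c : 'I_n) : psd (delta_mx c c : 'M[R]_n).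
Proof.
split; first by rewrite trmx_delta.
by move=> v; rewrite -[_ 0 0]/(qform _ v) qform_delta_mx sqr_ge0.
Qed.

Lemma psd_mul_tr n (w : 'cV[R]_n) : psd (w *m w^T).
Proof.
have := psd_mulmx_tr w (@psd_delta_mx 1 0).
have -> : delta_mx 0 0 = 1%:M :> 'M[R]_1.
  by apply/matrixP => i j; rewrite !ord1 !mxE.
by rewrite mulmx1.
Qed.

Lemma qform_ge0_homog n (M : 'M[R]_n) (c : 'I_n) (v : 'cV[R]_n) (K : R) :
  v c 0 != 0 -> (forall u : 'cV[R]_n, u c 0 = 1 -> 0 <= qform M u + K) ->
  0 <= qform M v + K * v c 0 ^+ 2.
Proof.
move=> vc M_ge0.
have -> : v = v c 0 *: ((v c 0)^-1 *: v) by rewrite scalerA divff // scale1r.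
rewrite qformZv !mxE mulVf // mulr1 [K * _]mulrC -mulrDr.
by rewrite mulr_ge0 ?sqr_ge0 // M_ge0 // mxE mulVf.
Qed.

End QuadraticForm.

Section SelectionMatrix.
Variable R : realType.
Variables (m n : nat) (e : 'I_m -> 'I_n).
Hypothesis e_inj : injective e.

Definition sel_mx : 'M[R]_(m, n) := \matrix_(x, i) (e x == i)%:R.
Definition restr_mx (M : 'M[R]_n) : 'M[R]_m := sel_mx *m M *m sel_mx^T.
Definition extn_mx (M : 'M[R]_m) : 'M[R]_n := sel_mx^T *m M *m sel_mx.

Lemma psd_restr_mx M : psd M -> psd (restr_mx M).
Proof. exact: psd_mulmx_tr. Qed.

Lemma psd_extn_mx M : psd M -> psd (extn_mx M).
Proof. by move=> PM; rewrite /extn_mx -[X in _ *m X]trmxK; apply: psd_mulmx_tr. Qed.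

Lemma sum_nat_eq_mul (F : 'I_n -> R) k : \sum_i (k == i)%:R * F i = F k.
Proof.
rewrite (bigD1 k) //= eqxx mul1r big1 ?addr0 // => i ik.
by rewrite eq_sym (negbTE ik) mul0r.
Qed.

Lemma restr_mxE M x y : restr_mx M x y = M (e x) (e y).
Proof.
rewrite /restr_mx mxE.
under eq_bigr => j _ do rewrite !mxE.
under eq_bigr => j _ do under eq_bigr => i _ do rewrite !mxE.
under eq_bigr => j _ do rewrite (sum_nat_eq_mul (fun i => M i j)) mulrC.
exact: (sum_nat_eq_mul (fun j => M (e x) j)).
Qed.

Lemma sum_sel_mul (F : 'I_m -> R) i :
  \sum_x (e x == i)%:R * F x = if [pick x | e x == i] is Some x then F x else 0.
Proof.
case: pickP => [x /eqP exi|none].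
  rewrite (bigD1 x) //= exi eqxx mul1r big1 ?addr0 // => y yx.
  by rewrite -exi (inj_eq e_inj) (negbTE yx) mul0r.
by rewrite big1 // => y _; rewrite none mul0r.
Qed.

Lemma extn_mxE M i j : extn_mx M i j =
  if [pick x | e x == i] is Some x then
    (if [pick y | e y == j] is Some y then M x y else 0) else 0.
Proof.
rewrite /extn_mx mxE.
under eq_bigr => y _ do rewrite !mxE.
under eq_bigr => y _ do under eq_bigr => x _ do rewrite !mxE.
under eq_bigr => y _ do rewrite sum_sel_mul.
rewrite (eq_bigr (fun y => (e y == j)%:R *
  (if [pick x | e x == i] is Some x then M x y else 0))); last first.
  by move=> y _; rewrite mulrC.
rewrite sum_sel_mul.
by case: [pick x | e x == i]; case: [pick y | e y == j].
Qed.

Lemma pick_inj x : [pick y | e y == e x] = Some x.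
Proof. by case: pickP => [y /eqP /e_inj -> //|/(_ x)]; rewrite eqxx. Qed.

Lemma extn_mx_inj M x y : extn_mx M (e x) (e y) = M x y.
Proof. by rewrite extn_mxE !pick_inj. Qed.

Lemma restr_extn_mx M : restr_mx (extn_mx M) = M.
Proof. by apply/matrixP => x y; rewrite restr_mxE extn_mx_inj. Qed.

Lemma extn_restr_mx (M : 'M[R]_n) :
  (forall i j, (forall x, e x != i) \/ (forall x, e x != j) -> M i j = 0) ->
  extn_mx (restr_mx M) = M.
Proof.
move=> M0; apply/matrixP => i j; rewrite extn_mxE.
case: pickP => [x /eqP <-|none]; last by rewrite M0 //; left => z; rewrite none.
case: pickP => [y /eqP <-|none]; last by rewrite M0 //; right => z; rewrite none.
by rewrite restr_mxE.
Qed.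

Lemma map_extn_mx (f : R -> R) M : f 0 = 0 -> map_mx f (extn_mx M) = extn_mx (map_mx f M).
Proof.
move=> f0; apply/matrixP => i j; rewrite mxE !extn_mxE.
by case: pickP => [x _|_] //; case: pickP => [y _|_] //; rewrite mxE.
Qed.

End SelectionMatrix.

Definition graph_emb (H G : graph) (e : 'I_(gn H) -> 'I_(gn G)) :=
  injective e /\ forall x y, gadj G (e x) (e y) = gadj H x y.
Arguments graph_emb : clear implicits.

Lemma graph_emb_id G : graph_emb G G id.
Proof. by split. Qed.

Lemma graph_emb_comp H G K e e' :
  graph_emb H G e -> graph_emb G K e' -> graph_emb H K (e' \o e).
Proof.
move=> [e_inj e_adj] [e'_inj e'_adj]; split; first exact: inj_comp.
by move=> x y /=; rewrite e'_adj e_adj.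
Qed.

Lemma preserves_positivity_emb (R : realType) (f : R -> R) H G e :
  f 0 = 0 -> graph_emb H G e ->
  preserves_positivity f G -> preserves_positivity f H.
Proof.
move=> f0 [e_inj e_adj] presG A [psdA A0].
have PG_extnA : PG (extn_mx e A).
  split; first exact: psd_extn_mx.
  move=> i j ij nadj; rewrite (extn_mxE e_inj).
  case: pickP => [x /eqP exi|] //; case: pickP => [y /eqP eyj|] //.
  apply: A0; first by apply: contraNneq ij => xy; rewrite -exi -eyj xy.
  by rewrite -e_adj exi eyj.
have [psd_fA _] := presG _ PG_extnA.
rewrite (map_extn_mx e_inj _ f0) in psd_fA.
split; first by rewrite -(restr_extn_mx e_inj (map_mx f A)); apply: psd_restr_mx.
by move=> i j ij nadj; rewrite mxE A0.
Qed.

Lemma gadj_neq G x y : gadj G x y -> x != y.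
Proof. by apply: contraTneq => ->; rewrite gadj_irr. Qed.

Definition no_isolated (H : graph) := forall x : 'I_(gn H), exists y, gadj H x y.

Lemma connected_no_isolated H : connected_graph H -> has_edge H -> no_isolated H.
Proof.
move=> conH [a [b ab]] x.
have [z xz] : exists z, x != z.
  by case: (eqVneq x a) => [->|]; [exists b; apply: gadj_neq ab|exists a].
have /connectP [[|z' s] /= path_xz zl] := conH x z; first by rewrite zl eqxx in xz.
by move/andP: path_xz => [xz' _]; exists z'.
Qed.

Definition path3_adj (x y : 'I_3) : bool := ((x + y == 1) || (x + y == 3))%N.
Lemma path3_adj_sym x y : path3_adj x y = path3_adj y x.
Proof. by rewrite /path3_adj addnC. Qed.
Lemma path3_adj_irr x : path3_adj x x = false.
Proof. by case: x => [[|[|[|x]]] Hx]. Qed.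
Definition path3 : graph := Graph path3_adj_sym path3_adj_irr.

Section Coalescence2.
Variables H1 H2 G : graph.
Variables (v1 : 'I_(gn H1)) (v2 : 'I_(gn H2)) (p : 'I_(gn H1) -> 'I_(gn G))
  (q : 'I_(gn H2) -> 'I_(gn G)).
Hypotheses (p_inj : injective p) (q_inj : injective q)
  (pq : forall x y, p x = q y <-> (x = v1 /\ y = v2))
  (adj : forall a b, gadj G a b <->
           ((exists x y, [/\ p x = a, p y = b & gadj H1 x y]) \/
            (exists x y, [/\ q x = a, q y = b & gadj H2 x y]))).

Lemma coalescence2_emb_l : graph_emb H1 G p.
Proof.
split => // x y; apply/idP/idP => [/adj [[x' [y' [/p_inj-> /p_inj-> //]]]|]|xy].
  by move=> [x' [y' [/esym/pq [-> ->] /esym/pq [-> ->] ]]]; rewrite gadj_irr.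
by apply/adj; left; exists x, y.
Qed.

Lemma coalescence2_emb_r : graph_emb H2 G q.
Proof.
split => // x y; apply/idP/idP => [/adj [|[x' [y' [/q_inj-> /q_inj-> //]]]]|xy].
  by move=> [x' [y' [/pq [-> ->] /pq [-> ->] ]]]; rewrite gadj_irr.
by apply/adj; right; exists x, y.
Qed.

Lemma coalescence2_path3 :
  no_isolated H1 -> no_isolated H2 -> exists e, graph_emb path3 G e.
Proof.
move=> iso1 iso2; have [u v1u] := iso1 v1; have [w v2w] := iso2 v2.
have [_ p_adj] := coalescence2_emb_l; have [_ q_adj] := coalescence2_emb_r.
have pq_v : p v1 = q v2 by apply/pq.
have pu_pv : p u != p v1 by rewrite (inj_eq p_inj) eq_sym gadj_neq.
have pu_qw : p u != q w by apply/eqP => /pq [uv _]; move: v1u; rewrite uv gadj_irr.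
have pv_qw : p v1 != q w by rewrite pq_v (inj_eq q_inj) gadj_neq.
have adj_uv : gadj G (p u) (p v1) by rewrite p_adj gadj_sym.
have adj_vw : gadj G (p v1) (q w) by rewrite pq_v q_adj.
have nadj_uw : gadj G (p u) (q w) = false.
  apply/negbTE/negP => /adj [[x [y [_ /pq [_ wv] _]]]|[x [y [/esym/pq [uv _] _ _]]]].
    by move: v2w; rewrite -wv gadj_irr.
  by move: v1u; rewrite -uv gadj_irr.
pose e (i : 'I_3) := match val i with 0 => p u | 1 => p v1 | _ => q w end.
have e_inj : injective e.
  move=> [[|[|[|i]]] Hi] [[|[|[|j]]] Hj] //= /eqP; rewrite /e /= => eij;
  first [exact: val_inj | by move: eij; rewrite ?(eq_sym (q w)) ?(eq_sym (p v1) (p u))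
    ?(negbTE pu_pv) ?(negbTE pu_qw) ?(negbTE pv_qw)].
exists e; split => // -[[|[|[|i]]] Hi] [[|[|[|j]]] Hj] //=; rewrite /e /path3_adj /=;
  by rewrite ?gadj_irr ?adj_uv ?adj_vw ?nadj_uw // gadj_sym ?adj_uv ?adj_vw ?nadj_uw.
Qed.

End Coalescence2.

Lemma coalescence_emb Gs i H : coalescence Gs i H ->
  forall j, (j <= i)%N -> exists e, graph_emb (Gs j) H e.
Proof.
elim=> [|{}i H' G' _ IH [v1 [v2 [p [q [p_inj q_inj pq _ adj]]]]]] j ji.
  by move: ji; rewrite leqn0 => /eqP ->; exists id; exact: graph_emb_id.
have emb_l := coalescence2_emb_l p_inj pq adj.
move: ji; rewrite leq_eqVlt => /orP [/eqP ->|].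
  by exists q; exact: coalescence2_emb_r pq adj.
rewrite ltnS => /IH [e emb_e]; exists (p \o e); exact: graph_emb_comp emb_l.
Qed.

Lemma coalescence_no_isolated Gs i H : coalescence Gs i H ->
  (forall j, (j <= i)%N -> no_isolated (Gs j)) -> no_isolated H.
Proof.
elim=> [|{}i H' G' _ IH [v1 [v2 [p [q [p_inj q_inj pq cover adj]]]]]] iso; first exact: iso.
have [_ p_adj] := coalescence2_emb_l p_inj pq adj.
have [_ q_adj] := coalescence2_emb_r q_inj pq adj.
move=> z; case: (cover z) => [[x <-]|[y <-]].
  have [x' xx'] := IH (fun j ji => iso j (leqW ji)) x.
  by exists (p x'); rewrite p_adj.
have [y' yy'] := iso i.+1 (leqnn _) y.
by exists (q y'); rewrite q_adj.
Qed.

Lemma coalescenceS_inv Gs i G : coalescence Gs i.+1 G ->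
  exists2 H, coalescence Gs i H & coalescence2 H (Gs i.+1) G.
Proof. by move=> c; inversion c; subst; eauto. Qed.

Section CutBlock.
Variables (R : realType) (G : graph) (A : 'M[R]_(gn G)) (c : 'I_(gn G)).
Hypothesis PG_A : PG A.

Definition cut_block (S : seq 'I_(gn G)) : 'M[R]_(gn G) := \matrix_(i, j)
  if [&& i \in S, j \in S & ~~ ((i == c) && (j == c))] then A i j else 0.

Lemma cut_block_tr S : (cut_block S)^T = cut_block S.
Proof.
have [[A_tr _] _] := PG_A.
have A_sym i j : A j i = A i j by rewrite -[in RHS]A_tr mxE.
apply/matrixP => i j; rewrite !mxE A_sym.
by case: (i \in S); case: (j \in S); case: (i == c); case: (j == c).
Qed.

Lemma qform_cut_block_local S (u v : 'cV[R]_(gn G)) :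
  {in S, forall i, u i 0 = v i 0} -> qform (cut_block S) u = qform (cut_block S) v.
Proof.
move=> uv; rewrite !qformE; apply: eq_bigr => i _; apply: eq_bigr => j _.
rewrite mxE; case: ifP => [/and3P [iS jS _]|_]; first by rewrite uv ?(uv j).
by rewrite !mulr0 !mul0r.
Qed.

Variables (H : graph) (e : 'I_(gn H) -> 'I_(gn G)).
Hypotheses (e_emb : graph_emb H G e) (c_e : c \in codom e).

Lemma PG_restr_cut_block x :
  psd (cut_block (codom e) + x *: delta_mx c c) ->
  PG (restr_mx e (cut_block (codom e) + x *: delta_mx c c)).
Proof.
have [e_inj e_adj] := e_emb.
move=> psdM; split; first exact: psd_restr_mx.
move=> y z yz nadj; rewrite restr_mxE !mxE.
have -> : (e y == c) && (e z == c) = false.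
  by apply/negbTE; apply: contra yz => /andP [/eqP eyc /eqP ezc]; rewrite -(inj_eq e_inj) eyc ezc.
rewrite mulr0 addr0; case: ifP => // _; have [_ A0] := PG_A; apply: A0.
  by rewrite (inj_eq e_inj).
by rewrite e_adj.
Qed.

Lemma extn_restr_cut_block x :
  extn_mx e (restr_mx e (cut_block (codom e) + x *: delta_mx c c)) =
  cut_block (codom e) + x *: delta_mx c c.
Proof.
have [e_inj _] := e_emb.
apply: extn_restr_mx => // i j off; rewrite !mxE.
have off_e : ~~ ((i \in codom e) && (j \in codom e)).
  by case: off => off; apply/negP => /andP [/codomP [y iy] /codomP [z jz]];
    [move: (off y) | move: (off z)]; rewrite -?iy -?jz eqxx.
have -> : (i == c) && (j == c) = false.
  apply/negbTE/negP => /andP [/eqP ic /eqP jc].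
  by case/negP: off_e; rewrite ic jc c_e.
by rewrite mulr0 addr0 /= andbT (negbTE off_e).
Qed.

End CutBlock.

Section CoalescenceSplit.
Variable R : realType.
Variables H1 H2 G : graph.
Variables (v1 : 'I_(gn H1)) (v2 : 'I_(gn H2)) (p : 'I_(gn H1) -> 'I_(gn G))
  (q : 'I_(gn H2) -> 'I_(gn G)).
Hypotheses (p_inj : injective p) (q_inj : injective q)
  (pq : forall x y, p x = q y <-> (x = v1 /\ y = v2))
  (cover : forall z, (exists x, p x = z) \/ (exists y, q y = z))
  (adj : forall a b, gadj G a b <->
           ((exists x y, [/\ p x = a, p y = b & gadj H1 x y]) \/
            (exists x y, [/\ q x = a, q y = b & gadj H2 x y]))).

Let n := gn G.
Let c := p v1.

Lemma codom_pq i : i \in codom p -> i \in codom q -> i = c.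
Proof. by move=> /codomP [x ->] /codomP [y /pq [-> _]]. Qed.

Lemma codom_p_c : c \in codom p.
Proof. exact: codom_f. Qed.

Lemma codom_q_c : c \in codom q.
Proof. by apply/codomP; exists v2; apply/pq. Qed.

Variable A : 'M[R]_n.
Hypothesis PG_A : PG A.

Let alpha := A c c.
Let Ap := cut_block A c (codom p).
Let Aq := cut_block A c (codom q).

Lemma coalescence_mx_cross i j :
  ~~ ((i \in codom p) && (j \in codom p)) -> ~~ ((i \in codom q) && (j \in codom q)) ->
  A i j = 0.
Proof.
have cov k : (k \in codom p) || (k \in codom q).
  by case: (cover k) => [[x <-]|[y <-]]; rewrite codom_f ?orbT.
move=> offp offq; have [_ A0] := PG_A; apply: A0.
  apply/eqP => ij; subst j; move: offp offq; rewrite !andbb.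
  by case/orP: (cov i) => ->.
apply/negP => /adj [[x [y [px py _]]]|[x [y [qx qy _]]]].
  by case/negP: offp; rewrite -px -py !codom_f.
by case/negP: offq; rewrite -qx -qy !codom_f.
Qed.

Lemma map_mx_coalescence_split (g : R -> R) (x y : R) : g 0 = 0 ->
  map_mx g A = map_mx g (Ap + x *: delta_mx c c) + map_mx g (Aq + y *: delta_mx c c)
    + (g alpha - g x - g y) *: delta_mx c c.
Proof.
move=> g0; apply/matrixP => i j; rewrite !mxE.
have [/andP [/eqP -> /eqP ->]|offc] := boolP ((i == c) && (j == c)).
  by rewrite !andbF ?eqxx ?mulr1 ?add0r; ring.
rewrite /= !andbT.
case: ifP => inp; case: ifP => inq; rewrite !mulr0 !addr0.
- move/andP: inp => [ip jp]; move/andP: inq => [iq jq].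
  by move: offc; rewrite (codom_pq ip iq) (codom_pq jp jq) eqxx.
- by rewrite g0 addr0.
- by rewrite g0 add0r.
- by rewrite coalescence_mx_cross ?inp ?inq // g0 addr0.
Qed.

Lemma qform_coalescence_split v :
  qform A v = qform Ap v + qform Aq v + alpha * v c 0 ^+ 2.
Proof.
have := @map_mx_coalescence_split id 0 0 erefl.
rewrite !map_mx_id // !subr0 (@scale0r _ _ (delta_mx c c)) !addr0 => ->.
by rewrite !qformD qformZ qform_delta_mx.
Qed.

Lemma qform_coalescence_glue (u w : 'cV[R]_n) :
  u c 0 = w c 0 -> 0 <= qform Ap u + qform Aq w + alpha * u c 0 ^+ 2.
Proof.
move=> uw; pose v : 'cV[R]_n := \col_i (if i \in codom p then u i 0 else w i 0).
have vc : v c 0 = u c 0 by rewrite mxE codom_p_c.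
have uv : {in codom p, forall i, u i 0 = v i 0} by move=> i ip; rewrite mxE ip.
have wv : {in codom q, forall i, w i 0 = v i 0}.
  by move=> i iq; rewrite mxE; case: ifP => // ip; rewrite (codom_pq ip iq).
rewrite -vc (qform_cut_block_local A c uv) (qform_cut_block_local A c wv).
by rewrite -qform_coalescence_split; have [psdA _] := PG_A; apply: psd_qform.
Qed.

Let e_c : 'cV[R]_n := delta_mx c 0.

Lemma e_c_c : e_c c 0 = 1.
Proof. by rewrite mxE !eqxx. Qed.

Lemma qform_cut_block_e_c S : qform (cut_block A c S) e_c = 0.
Proof. by rewrite qform_delta mxE eqxx !andbF. Qed.

Let defect := [set r : R | exists2 u : 'cV[R]_n, u c 0 = 1 & r = - qform Ap u]%classic.
Let beta := sup defect.

Lemma defect0 : defect 0.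
Proof. by exists e_c; rewrite ?e_c_c // qform_cut_block_e_c oppr0. Qed.

Lemma defect_ub : ubound defect alpha.
Proof.
move=> r [u uc ->]; have := @qform_coalescence_glue u e_c.
by rewrite uc e_c_c qform_cut_block_e_c expr1n mulr1 addr0 => /(_ erefl); lra.
Qed.

Lemma defect_le_beta (u : 'cV[R]_n) : u c 0 = 1 -> - qform Ap u <= beta.
Proof.
move=> uc; apply: sup_upper_bound; last by exists u.
by split; [exists 0; exact: defect0|exists alpha; exact: defect_ub].
Qed.

Lemma beta_ge0 : 0 <= beta.
Proof. by have := defect_le_beta e_c_c; rewrite qform_cut_block_e_c oppr0. Qed.

Lemma beta_le (u : 'cV[R]_n) : u c 0 = 1 -> beta <= alpha + qform Aq u.
Proof.
move=> uc; apply: ge_sup; first by exists 0; exact: defect0.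
move=> r [w wc ->]; have := @qform_coalescence_glue w u.
by rewrite uc wc expr1n mulr1 => /(_ erefl); lra.
Qed.

Lemma beta_le_alpha : beta <= alpha.
Proof. by have := beta_le e_c_c; rewrite qform_cut_block_e_c addr0. Qed.

Lemma psd_split_p : psd (Ap + beta *: delta_mx c c).
Proof.
split; first by rewrite linearD linearZ /= cut_block_tr // trmx_delta.
move=> v; rewrite -[_ 0 0]/(qform _ v) qformD qformZ qform_delta_mx.
have [vc|vc] := eqVneq (v c 0) 0.
  have := @qform_coalescence_glue v 0; rewrite mxE vc qform0v /= => /(_ erefl).
  by rewrite expr0n /= !mulr0 !addr0.
by apply: qform_ge0_homog => // u uc; have := defect_le_beta uc; lra.
Qed.

Lemma psd_split_q : psd (Aq + (alpha - beta) *: delta_mx c c).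
Proof.
split; first by rewrite linearD linearZ /= cut_block_tr // trmx_delta.
move=> v; rewrite -[_ 0 0]/(qform _ v) qformD qformZ qform_delta_mx.
have [vc|vc] := eqVneq (v c 0) 0.
  have := @qform_coalescence_glue 0 v; rewrite mxE vc qform0v /= => /(_ erefl).
  by rewrite expr0n /= !mulr0 !addr0 add0r.
by apply: qform_ge0_homog => // u uc; have := beta_le uc; lra.
Qed.

Lemma PG_map_mx_coalescence (f : R -> R) : f 0 = 0 -> superadditive_nonneg f ->
  preserves_positivity f H1 -> preserves_positivity f H2 -> PG (map_mx f A).
Proof.
move=> f0 f_sup presH1 presH2.
have emb_p := coalescence2_emb_l p_inj pq adj.
have emb_q := coalescence2_emb_r q_inj pq adj.
split; last by move=> i j ij nadj; have [_ A0] := PG_A; rewrite mxE A0.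
rewrite (map_mx_coalescence_split beta (alpha - beta) f0).
apply: psdD; first apply: psdD.
- rewrite -(extn_restr_cut_block A emb_p codom_p_c) (map_extn_mx p_inj _ f0).
  by apply: psd_extn_mx; case: (presH1 _ (PG_restr_cut_block PG_A emb_p psd_split_p)).
- rewrite -(extn_restr_cut_block A emb_q codom_q_c) (map_extn_mx q_inj _ f0).
  by apply: psd_extn_mx; case: (presH2 _ (PG_restr_cut_block PG_A emb_q psd_split_q)).
- apply: psdZ; last exact: psd_delta_mx.
  have := f_sup _ _ beta_ge0 (_ : 0 <= alpha - beta); rewrite addrCA subrr addr0.
  by rewrite subr_ge0 => /(_ beta_le_alpha); lra.
Qed.

End CoalescenceSplit.

Lemma preserves_positivity_coalescence2 (R : realType) (f : R -> R) H1 H2 G :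
  f 0 = 0 -> superadditive_nonneg f ->
  preserves_positivity f H1 -> preserves_positivity f H2 ->
  coalescence2 H1 H2 G -> preserves_positivity f G.
Proof.
move=> f0 f_sup presH1 presH2 [v1 [v2 [p [q [p_inj q_inj pq cover adj]]]]] A PG_A.
exact: (PG_map_mx_coalescence p_inj q_inj pq cover adj PG_A f0 f_sup presH1 presH2).
Qed.

Lemma binary_form_ge0_discr (R : realFieldType) (P Q S : R) :
  (forall s t, 0 <= s * P * s + s * Q * t + t * Q * s + t * S * t) -> Q ^+ 2 <= P * S.
Proof.
move=> form_ge0; have P_ge0 : 0 <= P by have := form_ge0 1 0; lra.
have [P0|P_neq0] := eqVneq P 0.
  have [->|Q_neq0] := eqVneq Q 0; first by rewrite P0 expr0n mul0r.
  have := form_ge0 (- (S + 1) / (2 * Q)) 1; rewrite P0.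
  have -> : - (S + 1) / (2 * Q) * 0 * (- (S + 1) / (2 * Q)) +
    - (S + 1) / (2 * Q) * Q * 1 + 1 * Q * (- (S + 1) / (2 * Q)) + 1 * S * 1 = -1 by field.
  lra.
have P_gt0 : 0 < P by rewrite lt_neqAle eq_sym P_neq0.
have := form_ge0 (- Q) P.
have -> : - Q * P * - Q + - Q * Q * P + P * Q * - Q + P * S * P = P * (P * S - Q ^+ 2) by ring.
by rewrite pmulr_rge0 // subr_ge0.
Qed.

Section Path3Test.
Variable R : realType.

Definition col3 (a b c : R) : 'cV[R]_3 := \col_i (nth 0 [:: a; b; c] i).

Definition path3_test_mx (a b c d : R) :=
  col3 a b 0 *m (col3 a b 0)^T + col3 0 c d *m (col3 0 c d)^T.

Lemma PG_path3_test_mx a b c d : @PG R path3 (path3_test_mx a b c d).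
Proof.
split; first by apply: psdD; apply: psd_mul_tr.
move=> [[|[|[|i]]] Hi] [[|[|[|j]]] Hj] //= _ _;
  by rewrite !mxE !big_ord1 ?mxE /= ?mxE /=; ring.
Qed.

Variable f : R -> R.
Hypotheses (f0 : f 0 = 0) (presP3 : preserves_positivity f path3).

Lemma path3_test a b c d t0 t1 t2 : 0 <=
  t0 * f (a * a) * t0 + t0 * f (a * b) * t1 + t1 * f (b * a) * t0 +
  t1 * f (b * b + c * c) * t1 + t1 * f (c * d) * t2 + t2 * f (d * c) * t1 +
  t2 * f (d * d) * t2.
Proof.
have [[_ psdf] _] := presP3 (PG_path3_test_mx a b c d).
have := psdf (col3 t0 t1 t2); rewrite -[_ 0 0]/(qform _ _) qformE.
rewrite !big_ord_recl !big_ord0 !mxE /= !big_ord1 !mxE /=.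
by rewrite !(mulr0, mul0r, addr0, add0r) f0 !(mulr0, mul0r, addr0, add0r); lra.
Qed.

Lemma sqrtr_mul_self (x : R) : 0 <= x -> Num.sqrt x * Num.sqrt x = x.
Proof. by move=> x0; rewrite -expr2 sqr_sqrtr. Qed.

Lemma path3_ge0 x : 0 <= x -> 0 <= f x.
Proof.
move=> x0; have := path3_test (Num.sqrt x) 0 0 0 1 0 0.
by rewrite sqrtr_mul_self // !(mulr0, mul0r, addr0, add0r, mul1r, mulr1) ?f0.
Qed.

Lemma path3_superadditive : superadditive_nonneg f.
Proof.
move=> x y x0 y0.
have := path3_test (Num.sqrt x) (Num.sqrt x) (Num.sqrt y) (Num.sqrt y) 1 (-1) 1.
by rewrite !sqrtr_mul_self //; lra.
Qed.

Lemma path3_sqr_le_mul a b c : 0 <= a -> 0 <= b -> 0 <= c -> b ^+ 2 = a * c ->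
  f b ^+ 2 <= f a * f c.
Proof.
move=> a0 b0 c0 bac; apply: binary_form_ge0_discr => s t.
have sqrt_ac : Num.sqrt a * Num.sqrt c = b by rewrite -sqrtrM // -bac sqrtr_sqr ger0_norm.
have := path3_test (Num.sqrt a) (Num.sqrt c) 0 0 s t 0.
rewrite [Num.sqrt c * _]mulrC sqrt_ac !sqrtr_mul_self //.
by rewrite !(mulr0, mul0r, addr0, add0r) ?f0.
Qed.

End Path3Test.

Definition continuous_nonneg_at (R : realType) (f : R -> R) (x : R) :=
  forall e, 0 < e -> exists2 d, 0 < d &
    forall y, 0 <= y -> `|x - y| < d -> `|f x - f y| < e.

Lemma continuous_nonneg_from_at (R : realType) (f : R -> R) :
  (forall x, 0 <= x -> continuous_nonneg_at f x) -> continuous_nonneg f.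
Proof.
move=> cont_at; apply/subspace_continuousP => x /= x0.
apply/cvgrPdist_lt => e e0; have [d d0 near_x] := cont_at x x0 e e0.
by rewrite near_withinE; near=> y => /= y0; apply: near_x.
Unshelve. all: end_near.
Qed.

Section SuperadditiveContinuity.
Variables (R : realType) (f : R -> R).
Hypotheses (f0 : f 0 = 0) (f_ge0 : forall x, 0 <= x -> 0 <= f x)
  (f_sup : superadditive_nonneg f)
  (f_sqr_le : forall a b c, 0 <= a -> 0 <= b -> 0 <= c -> b ^+ 2 = a * c ->
     f b ^+ 2 <= f a * f c).

Lemma superadditive_le x y : 0 <= x -> x <= y -> f x <= f y.
Proof.
move=> x0 xy; have yx0 : 0 <= y - x by rewrite subr_ge0.
by have := f_sup x0 yx0; rewrite addrCA subrr addr0; have := f_ge0 yx0; lra.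
Qed.

Lemma superadditive_mulrn x n : 0 <= x -> f x *+ n <= f (x *+ n).
Proof.
move=> x0; elim: n => [|n IH]; first by rewrite !mulr0n f0.
by rewrite !mulrS; apply: le_trans (f_sup x0 (mulrn_wge0 _ x0)); rewrite lerD2l.
Qed.

Lemma superadditive_continuous_at0 : continuous_nonneg_at f 0.
Proof.
move=> e e0; set N := (Num.truncn (f 1 / e)).+1.
have N_gt0 : 0 < N%:R :> R by rewrite ltr0n.
exists N%:R^-1; first by rewrite invr_gt0.
move=> y y0; rewrite sub0r normrN ger0_norm // f0 sub0r normrN ger0_norm ?f_ge0 // => yN.
have yN_le1 : y *+ N <= 1.
  have : y * N%:R < N%:R^-1 * N%:R by rewrite ltr_pM2r.
  by rewrite mulVf ?gt_eqF // mulr_natr => /ltW.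
have fyN : f y * N%:R <= f 1.
  rewrite mulr_natr; apply: le_trans (superadditive_mulrn N y0) _.
  exact: superadditive_le (mulrn_wge0 _ y0) yN_le1.
have : f 1 < e * N%:R by rewrite mulrC -ltr_pdivrMr // truncnS_gt.
by move=> /(le_lt_trans fyN); rewrite ltr_pM2r.
Qed.

Lemma superadditive_eq0 x : 0 < x -> f x = 0 -> forall y, 0 <= y -> f y = 0.
Proof.
move=> x_gt0 fx0 y y0; have [yx|xy] := leP y x.
  by apply/eqP; rewrite eq_le f_ge0 // andbT -fx0 superadditive_le.
have c0 : 0 <= y ^+ 2 / x by rewrite divr_ge0 ?sqr_ge0 ?ltW.
have := f_sqr_le (ltW x_gt0) y0 c0; rewrite fx0 mul0r mulrC divfK ?gt_eqF //.
by move=> /(_ erefl) fy2; apply/eqP; rewrite -sqrf_eq0 eq_le fy2 sqr_ge0.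
Qed.

Section PositivePoint.
Variable x : R.
Hypotheses (x_gt0 : 0 < x) (fx_gt0 : 0 < f x).

Lemma superadditive_gt0 y : x <= y -> 0 < f y.
Proof. by move=> xy; apply: lt_le_trans fx_gt0 (superadditive_le (ltW x_gt0) xy). Qed.

Lemma le_mulr_exprn q j : 1 <= q -> x <= x * q ^+ j.
Proof. by move=> q1; apply: ler_peMr; [exact: ltW | exact: exprn_ege1]. Qed.

Lemma superadditive_geom_ratio q j : 1 <= q ->
  f (x * q) * f (x * q ^+ j) <= f (x * q ^+ j.+1) * f x.
Proof.
move=> q1; have F_gt0 i := superadditive_gt0 (le_mulr_exprn i q1).
elim: j => [|j IH]; first by rewrite expr1 expr0 mulr1 mulrC.
have sqr_le : f (x * q ^+ j.+1) ^+ 2 <= f (x * q ^+ j) * f (x * q ^+ j.+2).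
  by apply: f_sqr_le; rewrite ?(le_trans (ltW x_gt0)) ?le_mulr_exprn // !exprS; ring.
rewrite -(ler_pM2l (F_gt0 j)); apply: (le_trans (y := f (x * q ^+ j.+1) ^+ 2 * f x)).
  by rewrite expr2; have := ler_wpM2r (ltW (F_gt0 j.+1)) IH; nra.
by rewrite mulrA ler_wpM2r // ltW.
Qed.

Lemma superadditive_geom_lower q j : 1 <= q ->
  f x + j%:R * (f (x * q) - f x) <= f (x * q ^+ j).
Proof.
move=> q1; have F_gt0 i := superadditive_gt0 (le_mulr_exprn i q1).
have F1_ge : f x <= f (x * q).
  by apply: superadditive_le; [exact: ltW | exact: ler_peMr (ltW x_gt0) q1].
elim: j => [|j IH]; first by rewrite mul0r addr0 expr0 mulr1.
have ratio := superadditive_geom_ratio j q1.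
have b_gt0 : 0 < f (x * q) by have := F_gt0 1%N; rewrite expr1.
rewrite -natr1; move: IH F1_ge ratio b_gt0.
set a := f x; set b := f (x * q); set u := f (x * q ^+ j); set v := f (x * q ^+ j.+1).
move=> IH ab ratio b_gt0; have j0 : 0 <= j%:R :> R by [].
have := le_trans (ler_wpM2l (ltW b_gt0) IH) ratio.
have : 0 <= j%:R * (b - a) * (b - a) by rewrite !mulr_ge0 ?subr_ge0.
have -> : a + (j%:R + 1) * (b - a) =
  (b * (a + j%:R * (b - a)) - j%:R * (b - a) * (b - a)) / a by field; rewrite gt_eqF.
by rewrite ler_pdivrMr // [v * a]mulrC; lra.
Qed.

Lemma superadditive_left_gap q : 1 <= q -> f x - f (x / q) <= f (x * q) - f x.
Proof.
move=> q1; have q_gt0 : 0 < q by lra.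
have fxq_gt0 : 0 < f (x * q) := superadditive_gt0 (ler_peMr (ltW x_gt0) q1).
have sqr_le : f x ^+ 2 <= f (x / q) * f (x * q).
  apply: f_sqr_le; rewrite ?mulr_ge0 ?divr_ge0 ?invr_ge0 ?ltW //.
  by field; rewrite gt_eqF.
have fxdq_ge0 := f_ge0 (divr_ge0 (ltW x_gt0) (ltW q_gt0)).
have two_fx : 2 * f x <= f (x * q) + f (x / q).
  have [fx_ge0 fxq_ge0] := (ltW fx_gt0, ltW fxq_gt0).
  rewrite -ler_sqr ?nnegrE ?mulr_ge0 ?addr_ge0 //.
  have -> : (f (x * q) + f (x / q)) ^+ 2 =
    (f (x * q) - f (x / q)) ^+ 2 + 4 * (f (x / q) * f (x * q)) by ring.
  have -> : (2 * f x) ^+ 2 = 4 * f x ^+ 2 by ring.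
  by have := sqr_ge0 (f (x * q) - f (x / q)); lra.
lra.
Qed.

Lemma superadditive_right_gap_small e : 0 < e -> exists2 q, 1 < q & f (x * q) - f x < e.
Proof.
move=> e0; set N := (Num.truncn ((f (x * 2) - f x) / e)).+1.
have N_gt0 : 0 < N%:R :> R by rewrite ltr0n.
set q : R := 2 `^ N%:R^-1.
have qN : q ^+ N = 2 by rewrite -powR_mulrn ?powR_ge0 // -powRrM mulVf ?powRr1 ?gt_eqF.
have q1 : 1 <= q.
  have N_inv_ge0 : 0 <= N%:R^-1 :> R by rewrite invr_ge0 ler0n.
  have := @ge0_ler_powR _ _ N_inv_ge0 1 2; rewrite powR1 !nnegrE.
  by apply; rewrite ?ler01 ?ler0n ?ler1n.
exists q.
  rewrite lt_neqAle q1 andbT; apply/eqP => q_eq1.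
  by move: qN; rewrite -q_eq1 expr1n => ?; lra.
have := superadditive_geom_lower N q1; rewrite qN => lower.
have : (f (x * 2) - f x) / e < N%:R by apply: truncnS_gt.
by rewrite ltr_pdivrMr // => gap; rewrite -(ltr_pM2l N_gt0); nra.
Qed.

Lemma superadditive_continuous_at_pos : continuous_nonneg_at f x.
Proof.
move=> e e0; have [q q1 right_gap] := superadditive_right_gap_small e0.
have q_gt0 : 0 < q by lra.
have left_gap := superadditive_left_gap (ltW q1).
exists (x * (1 - q^-1)).
  by rewrite mulr_gt0 // subr_gt0 invf_lt1.
move=> y y0; rewrite ltr_distl => /andP [lo hi].
have xq_le : x / q <= y by move: hi; rewrite mulrBr mulr1 => ?; lra.
have le_xq : y <= x * q.
  suff : x * (1 - q^-1) <= x * (q - 1) by lra.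
  rewrite ler_pM2l // -subr_ge0.
  have -> : q - 1 - (1 - q^-1) = (q - 1) ^+ 2 / q by field; rewrite gt_eqF.
  by rewrite divr_ge0 ?sqr_ge0 ?ltW.
have f_lo := superadditive_le (divr_ge0 (ltW x_gt0) (ltW q_gt0)) xq_le.
have f_hi := superadditive_le y0 le_xq.
by rewrite ltr_distl; apply/andP; split; lra.
Qed.

End PositivePoint.

Lemma superadditive_continuous : continuous_nonneg f.
Proof.
apply: continuous_nonneg_from_at => x x0 e e0.
have [<-|x_neq0] := eqVneq 0 x; first exact: superadditive_continuous_at0.
have x_gt0 : 0 < x by rewrite lt_neqAle x_neq0.
have [fx0|fx_neq0] := eqVneq (f x) 0; last first.
  by apply: superadditive_continuous_at_pos; rewrite // lt_neqAle eq_sym fx_neq0 f_ge0.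
exists 1 => // y y0 _.
by rewrite fx0 (superadditive_eq0 x_gt0 fx0 y0) subrr normr0.
Qed.

End SuperadditiveContinuity.

Section PowerFunctions.
Variable R : realType.

Lemma powR_superadditive (a x y : R) : 1 <= a -> 0 <= x -> 0 <= y ->
  x `^ a + y `^ a <= (x + y) `^ a.
Proof.
move=> a1 x0 y0; have a_neq0 : a != 0 by rewrite gt_eqF //; lra.
set s := x + y; have [s0|s_neq0] := eqVneq s 0.
  have [-> ->] : x = 0 /\ y = 0 by rewrite /s in s0; split; lra.
  by rewrite s0 powR0.
have s_gt0 : 0 < s by rewrite lt_neqAle eq_sym s_neq0 addr_ge0.
have frac_le z : 0 <= z <= s -> z `^ a <= z / s * s `^ a.
  move=> /andP [z0 zs]; have [->|z_neq0] := eqVneq z 0; first by rewrite powR0 // !mul0r.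
  have zs_frac : 0 < z / s <= 1.
    by rewrite divr_gt0 ?ler_pdivrMr ?mul1r // lt_neqAle eq_sym z_neq0.
  by have := ge1r_powRZ zs_frac (ltW s_gt0) a1; rewrite divfK.
have hx : x `^ a <= x / s * s `^ a by apply: frac_le; rewrite x0 /s; lra.
have hy : y `^ a <= y / s * s `^ a by apply: frac_le; rewrite y0 /s; lra.
have -> : s `^ a = x / s * s `^ a + y / s * s `^ a.
  by rewrite -mulrDl -mulrDl divff // mul1r.
lra.
Qed.

Lemma powR_ge1 (a : R) : 2 <= 2 `^ a -> 1 <= a.
Proof.
rewrite /powR gt_eqF // -{1}[2]lnK ?posrE // ler_expR.
by rewrite -{1}[ln 2]mul1r ler_pM2r // ln_gt0 // ltr1n.
Qed.

Lemma psi_gt0 (a x : R) : 0 < x -> psi a x = x `^ a.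
Proof. by move=> x_gt0; rewrite /psi gt_eqF // gtr0_sg // mul1r gtr0_norm. Qed.

Lemma phi_gt0 (a x : R) : 0 < x -> phi a x = x `^ a.
Proof. by move=> x_gt0; rewrite /phi gt_eqF // gtr0_norm. Qed.

End PowerFunctions.

Lemma preserves_positivity_coalescence (R : realType) (f : R -> R) Gs i H :
  coalescence Gs i H -> f 0 = 0 -> superadditive_nonneg f ->
  (forall j, (j <= i)%N -> preserves_positivity f (Gs j)) ->
  preserves_positivity f H.
Proof.
move=> coal f0 f_sup; elim: coal => [|{}i H' G' _ IH coal2] presGs; first exact: presGs.
apply: preserves_positivity_coalescence2 f0 f_sup _ _ coal2; last exact: presGs.
by apply: IH => j ji; apply: presGs; apply: leqW.
Qed.

Lemma preserves_positivity_path3 (R : realType) (f : R -> R) :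
  f 0 = 0 -> preserves_positivity f path3 ->
  continuous_nonneg f /\ superadditive_nonneg f.
Proof.
move=> f0 presP3; have f_sup := path3_superadditive f0 presP3; split => //.
exact: superadditive_continuous f0 (path3_ge0 f0 presP3) f_sup (path3_sqr_le_mul f0 presP3).
Qed.

Lemma coalescence_path3 (k : nat) (Gs : nat -> graph) (G : graph) :
  (1 < k)%N ->
  (forall i, (i < k)%N -> connected_graph (Gs i) /\ has_edge (Gs i)) ->
  coalescence Gs k.-1 G -> exists e, graph_emb path3 G e.
Proof.
move=> k_gt1 conGs coalG.
have iso j : (j < k)%N -> no_isolated (Gs j).
  by move=> jk; have [? ?] := conGs j jk; apply: connected_no_isolated.
have [H coalH coal2] : exists2 H, coalescence Gs k.-2 H & coalescence2 H (Gs k.-2.+1) G.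
  by apply: coalescenceS_inv; rewrite (_ : k.-2.+1 = k.-1) //; lia.
have [v1 [v2 [p [q [p_inj q_inj pq _ adj]]]]] := coal2.
apply: (coalescence2_path3 p_inj q_inj pq adj).
  by apply: (coalescence_no_isolated coalH) => j jk; apply: iso; lia.
by apply: iso; lia.
Qed.

Lemma preserves_positivity_coalescence_iff (R : realType) (k : nat) (Gs : nat -> graph)
    (G : graph) (f : R -> R) :
  (1 < k)%N ->
  (forall i, (i < k)%N -> connected_graph (Gs i) /\ has_edge (Gs i)) ->
  coalescence Gs k.-1 G -> f 0 = 0 ->
  preserves_positivity f G <->
  [/\ (forall i, (i < k)%N -> preserves_positivity f (Gs i)),
      continuous_nonneg f & superadditive_nonneg f].
Proof.
move=> k_gt1 conGs coalG f0; split => [presG|[presGs _ f_sup]].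
  have [e emb_e] := coalescence_path3 k_gt1 conGs coalG.
  have [f_cont f_sup] := preserves_positivity_path3 f0 (preserves_positivity_emb f0 emb_e presG).
  split => // i ik; have ik' : (i <= k.-1)%N by lia.
  have [e' emb_e'] := coalescence_emb coalG ik'.
  exact: preserves_positivity_emb f0 emb_e' presG.
apply: (preserves_positivity_coalescence coalG f0 f_sup) => j jk.
by apply: presGs; lia.
Qed.

Lemma superadditive_power (R : realType) (g : R -> R) (a : R) :
  g 0 = 0 -> (forall x, 0 < x -> g x = x `^ a) -> 1 <= a -> superadditive_nonneg g.
Proof.
move=> g0 g_pos a1 x y x0 y0.
have [->|x_neq0] := eqVneq x 0; first by rewrite g0 !add0r.
have [->|y_neq0] := eqVneq y 0; first by rewrite g0 !addr0.
have [x_gt0 y_gt0] : 0 < x /\ 0 < y by rewrite !lt_neqAle eq_sym x_neq0 eq_sym y_neq0.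
by rewrite !g_pos ?addr_gt0 //; exact: powR_superadditive.
Qed.

Lemma preserves_positivity_power_iff (R : realType) (k : nat) (Gs : nat -> graph)
    (G : graph) (g : R -> R -> R) :
  (forall a, g a 0 = 0) -> (forall a x, 0 < x -> g a x = x `^ a) ->
  (1 < k)%N ->
  (forall i, (i < k)%N -> connected_graph (Gs i) /\ has_edge (Gs i)) ->
  coalescence Gs k.-1 G ->
  forall a, preserves_positivity (g a) G <->
    (1 <= a /\ forall i, (i < k)%N -> preserves_positivity (g a) (Gs i)).
Proof.
move=> g0 g_pos k_gt1 conGs coalG a; split => [presG|[a1 presGs]].
  have [presGs _ g_sup] := iffLR (preserves_positivity_coalescence_iff k_gt1 conGs coalG (g0 a)) presG.
  split => //; apply: powR_ge1; have := g_sup 1 1 ler01 ler01.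
  by rewrite !g_pos ?ltr01 ?addr_gt0 // powR1 (_ : 1 + 1 = 2).
apply: (preserves_positivity_coalescence coalG (g0 a) (superadditive_power (g0 a) (g_pos a) a1)).
by move=> j jk; apply: presGs; lia.
Qed.

Theorem proposition4p11 (R : realType) (k : nat) (Gs : nat -> graph) (G : graph) :
  (1 < k)%N ->
  (forall i, (i < k)%N -> connected_graph (Gs i) /\ has_edge (Gs i)) ->
  coalescence Gs k.-1 G ->
  [/\ (forall f : R -> R, f 0 = 0 ->
        (preserves_positivity f G <->
         [/\ (forall i, (i < k)%N -> preserves_positivity f (Gs i)),
             continuous_nonneg f & superadditive_nonneg f])),
      (forall a : R, preserves_positivity (psi a) G <->
         (1 <= a /\ forall i, (i < k)%N -> preserves_positivity (psi a) (Gs i))) &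
      (forall a : R, preserves_positivity (phi a) G <->
         (1 <= a /\ forall i, (i < k)%N -> preserves_positivity (phi a) (Gs i)))].
Proof.
move=> k_gt1 conGs coalG; split.
- by move=> f f0; apply: preserves_positivity_coalescence_iff.
- apply: preserves_positivity_power_iff k_gt1 conGs coalG; last exact: psi_gt0.
  by move=> a; rewrite /psi eqxx.
- apply: preserves_positivity_power_iff k_gt1 conGs coalG; last exact: phi_gt0.
  by move=> a; rewrite /phi eqxx.
Qed.
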